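(* Assume $K_1\subseteq K_2\subseteq\cdots\subseteq K_n\subseteq\mathbb F_q$ are subfields. Let $1\le h\le n$ and $p=\gamma_1X_1+\cdots+\gamma_hX_h+\eta\in\mathbb F_q[X_1,\dots,X_n]$ with $\gamma_1,\dots,\gamma_h,\eta\in\mathbb F_q$ and $\gamma_h\ne 0$, and let $j\in\{1,\dots,n\}$. Then there exists $\varphi\in\mathrm{Aff}(\mathcal X)$ with $X_j\circ\varphi=p$ if and only if $\gamma_i\in K_j$ for all $i\in\{1,\dots,h\}$, $\eta\in K_j$, and $K_h=K_j$.
   Context: $\mathcal X=K_1\times\cdots\times K_n\subseteq\mathbb F_q^n$. $\mathrm{Aff}(\mathbb F_q^n)$ is the group of maps $\boldsymbol\alpha\mapsto A\boldsymbol\alpha+\boldsymbol\beta$ with $A\in GL(n,\mathbb F_q)$, $\boldsymbol\beta\in\mathbb F_q^n$. $\mathrm{Aff}(\mathcal X)$ is the set of maps $\varphi:\mathcal X\to\mathcal X$ of the form $\varphi=\psi|_{\mathcal X}$ with $\psi\in\mathrm{Aff}(\mathbb F_q^n)$ and $\psi(\mathcal X)=\mathcal X$; such $\psi$ is unique. For $f\in\mathbb F_q[X_1,\dots,X_n]$ and $\varphi=\psi|_{\mathcal X}\in\mathrm{Aff}(\mathcal X)$, $f\circ\varphi$ is the polynomial $f(\psi(X_1,\dots,X_n))$, where $(X_1,\dots,X_n)$ is viewed as a column vector. *)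

From mathcomp Require Import all_boot all_order all_algebra all_field.
From mathcomp Require Import mpoly.
Set Implicit Arguments. Unset Strict Implicit. Unset Printing Implicit Defensive.
Import GRing.Theory.
Local Open Scope ring_scope.

Definition is_subfield (F : finFieldType) (S : {set F}) : Prop :=
  [/\ 0 \in S, 1 \in S, {in S &, forall x y, x - y \in S},
      {in S &, forall x y, x * y \in S} & {in S, forall x, x^-1 \in S}].

(* membership in X = K_0 x ... x K_{n-1}, points of F^n as column vectors *)
Definition inX (F : finFieldType) (n : nat) (K : 'I_n -> {set F}) (x : 'cV[F]_n) : Prop :=
  forall i : 'I_n, x i 0 \in K i.

Definition aff_app (F : finFieldType) (n : nat) (A : 'M[F]_n) (b : 'cV[F]_n) (x : 'cV[F]_n) :=
  A *m x + b.

Definition aff_preserves (F : finFieldType) (n : nat) (K : 'I_n -> {set F})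
  (A : 'M[F]_n) (b : 'cV[F]_n) : Prop :=
  (forall x, inX K x -> inX K (aff_app A b x)) /\
  (forall y, inX K y -> exists x, inX K x /\ aff_app A b x = y).

Definition aff_polys (F : finFieldType) (n : nat) (A : 'M[F]_n) (b : 'cV[F]_n)
  : n.-tuple {mpoly F[n]} :=
  [tuple \sum_(k < n) A i k *: 'X_k + (b i 0)%:MP | i < n].

(* f o phi for phi = psi|_X *)
Definition comp_aff (F : finFieldType) (n : nat) (f : {mpoly F[n]}) (A : 'M[F]_n) (b : 'cV[F]_n)
  : {mpoly F[n]} := f \mPo aff_polys A b.

From mathcomp Require Import all_boot all_order all_algebra all_field.
From mathcomp Require Import mpoly.
From mathcomp Require Import all_fingroup.
Import GRing.Theory.
Local Open Scope ring_scope.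
Set Implicit Arguments. Unset Strict Implicit.

(* The coordinate polynomial X_j composed with psi(x) = A x + b is the affine
   polynomial whose coefficients are the j-th row of A and the constant b_j.
   So X_j o phi = p pins down row j of A (= the gamma's) and b_j (= eta).

   Necessity.  An affine map sending X into X sends 0 into X, so b_i is in K_i,
   and sends t e_k (t in K_k) into X, so A_ik * t is in K_i; in particular
   A_ik != 0 forces K_k <= K_i.  Applied to row j this gives gamma_k, eta in
   K_j and K_h <= K_j.  Since psi restricts to a bijection of the finite set X,
   its inverse x |-> A^-1 x - A^-1 b also maps X into X; the (j,j) entry of
   A A^-1 = 1 yields k with A_jk != 0 and (A^-1)_kj != 0, whence k <= h and
   K_j <= K_k <= K_h.

   Sufficiency.  Replace row h of the identity matrix by the gammas (a lower
   triangular matrix with diagonal entry gamma_h != 0), add eta in coordinate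
   h, and swap coordinates j and h; as K_j = K_h the swap respects X.  An
   injective affine map sending the finite set X into itself is onto X. *)

Section Subfield.
Variables (F : finFieldType) (S : {set F}) (hS : is_subfield S).

Lemma subfield0 : 0 \in S. Proof. by case: hS. Qed.
Lemma subfield1 : 1 \in S. Proof. by case: hS. Qed.

Lemma subfieldB x y : x \in S -> y \in S -> x - y \in S.
Proof. by case: hS => _ _ hB _ _; apply: hB. Qed.

Lemma subfieldM x y : x \in S -> y \in S -> x * y \in S.
Proof. by case: hS => _ _ _ hM _; apply: hM. Qed.

Lemma subfieldV x : x \in S -> x^-1 \in S.
Proof. by case: hS => _ _ _ _ hV; apply: hV. Qed.

Lemma subfieldD x y : x \in S -> y \in S -> x + y \in S.
Proof.
move=> xS yS; rewrite -[y]opprK -[- y]sub0r.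
by apply: subfieldB => //; apply: subfieldB => //; apply: subfield0.
Qed.

Lemma subfield_sum (I : finType) (P : pred I) (f : I -> F) :
  (forall i, P i -> f i \in S) -> \sum_(i | P i) f i \in S.
Proof.
by move=> fS; apply: (big_ind (fun x => x \in S)); [apply: subfield0 | apply: subfieldD |].
Qed.

End Subfield.

Section AffinePoly.
Variables (R : comNzRingType) (n : nat).

Definition affine_mpoly (c : 'I_n -> R) (d : R) : {mpoly R[n]} :=
  \sum_(k < n) c k *: 'X_k + d%:MP.

Lemma mcoeff_affineX c d k : (affine_mpoly c d)@_U_(k) = c k.
Proof.
rewrite mcoeffD raddf_sum /= mcoeffC mnm1_eq0 mulr0 addr0.
rewrite (bigD1 k) //= big1 ?addr0; first by rewrite mcoeffZ mcoeffXU eqxx mulr1.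
by move=> i /negbTE ik; rewrite mcoeffZ mcoeffXU ik mulr0.
Qed.

Lemma mcoeff_affine0 c d : (affine_mpoly c d)@_0 = d.
Proof.
rewrite mcoeffD raddf_sum /= mcoeffC eqxx mulr1 big1 ?add0r // => i _.
by rewrite mcoeffZ mcoeffX mnm1_eq0 mulr0.
Qed.

Lemma affine_mpoly_inj c c' d d' :
  affine_mpoly c d = affine_mpoly c' d' -> c =1 c' /\ d = d'.
Proof.
move=> e; split; last by rewrite -(mcoeff_affine0 c d) e mcoeff_affine0.
by move=> k; rewrite -(mcoeff_affineX c d k) e mcoeff_affineX.
Qed.

End AffinePoly.

Lemma comp_aff_X (F : finFieldType) n (j : 'I_n) (A : 'M[F]_n) (b : 'cV[F]_n) :
  comp_aff 'X_j A b = affine_mpoly (fun k => A j k) (b j 0).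
Proof. by rewrite /comp_aff comp_mpolyXU /aff_polys -tnth_nth tnth_mktuple. Qed.

(* If A B = 1, the (j,j) entry 1 = sum_k A_jk B_kj has a nonzero term. *)
Lemma mulmx1_diag_witness (R : nzRingType) n (A B : 'M[R]_n) (j : 'I_n) :
  A *m B = 1%:M -> exists k, A j k != 0 /\ B k j != 0.
Proof.
move=> /(congr1 (fun M : 'M[R]_n => M j j)); rewrite !mxE eqxx /=.
case: (pickP (fun k => (A j k != 0) && (B k j != 0))) => [k /andP[]|none].
  by exists k.
rewrite big1 => [/eqP|k _]; first by rewrite eq_sym oner_eq0.
by move/negbT: (none k); rewrite negb_and !negbK => /orP[] /eqP ->; rewrite ?mul0r ?mulr0.
Qed.

Definition row_replace_mx (F : fieldType) n (r : 'I_n) (c : 'I_n -> F) : 'M[F]_n :=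
  \matrix_(i, k) if i == r then c k else (i == k)%:R.

(* It is lower triangular with diagonal 1, ..., c r, ..., 1. *)
Lemma row_replace_mx_unit (F : fieldType) n (r : 'I_n) (c : 'I_n -> F) :
  (forall k : 'I_n, (r < k)%N -> c k = 0) -> c r != 0 ->
  row_replace_mx r c \in unitmx.
Proof.
move=> c_hi cr; rewrite unitmxE det_trig; last first.
  apply/is_trig_mxP => i k lt_ik; rewrite mxE; case: eqP => [ir | _].
    by apply: c_hi; rewrite -ir.
  by case: eqP lt_ik => [-> | _]; rewrite ?ltnn.
rewrite (bigD1 r) //= big1 ?mulr1; first by rewrite mxE eqxx unitfE.
by move=> i /negbTE ne; rewrite mxE ne eqxx.
Qed.

Lemma row_replace_mxE (F : fieldType) n (r : 'I_n) (c : 'I_n -> F) (x : 'cV[F]_n) i :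
  (row_replace_mx r c *m x) i 0 = if i == r then \sum_k c k * x k 0 else x i 0.
Proof.
rewrite mxE; case: eqP => [-> | /eqP/negbTE ir].
  by apply: eq_bigr => k _; rewrite mxE eqxx.
rewrite (bigD1 i) //= big1 ?addr0 => [|k /negbTE ki]; rewrite mxE ir ?eqxx ?mul1r //.
by rewrite eq_sym ki mul0r.
Qed.

Section MapsIntoX.
Variables (F : finFieldType) (n : nat) (K : 'I_n -> {set F}).
Hypothesis hK : forall i, is_subfield (K i).

Definition aff_maps_into (M : 'M[F]_n) (c : 'cV[F]_n) : Prop :=
  forall x, inX K x -> inX K (aff_app M c x).

Lemma inX0 : inX K 0. Proof. by move=> i; rewrite mxE; apply: subfield0 (hK i). Qed.

(* The image of the origin: c_i is in K_i. *)
Lemma maps_into_const M c i : aff_maps_into M c -> c i 0 \in K i.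
Proof. by move=> Mc; have := Mc 0 inX0 i; rewrite /aff_app mulmx0 add0r. Qed.

(* The image of t e_k: M_ik t is in K_i for t in K_k. *)
Lemma maps_into_entry M c i k t :
  aff_maps_into M c -> t \in K k -> M i k * t \in K i.
Proof.
move=> Mc tK; have tX : inX K (t *: delta_mx k 0).
  move=> l; rewrite !mxE; case: eqP => [-> | _]; rewrite ?mulr1 ?mulr0 //.
  exact: subfield0 (hK l).
have := Mc _ tX i; rewrite /aff_app -scalemxAr -colE !mxE mulrC => Mtc.
rewrite -(addrK (c i 0) (M i k * t)); apply: (subfieldB (hK i)) => //.
exact: maps_into_const Mc.
Qed.

Lemma maps_into_support M c i k :
  aff_maps_into M c -> M i k != 0 -> K k \subset K i.
Proof.
move=> Mc nz; have MikK : M i k \in K i.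
  by rewrite -[M i k]mulr1; apply: maps_into_entry Mc (subfield1 (hK k)).
apply/subsetP => t tK; rewrite -[t](mulKf nz).
apply: (subfieldM (hK i)); first exact: (subfieldV (hK i) MikK).
exact: maps_into_entry Mc tK.
Qed.

(* An invertible affine map sending the finite set X into itself is onto X. *)
Lemma maps_into_preserves A b :
  A \in unitmx -> aff_maps_into A b -> aff_preserves K A b.
Proof.
move=> uA Ab; split=> // y yX.
pose S := [set x : 'cV[F]_n | [forall i, x i 0 \in K i]].
have inS x : reflect (inX K x) (x \in S).
  by rewrite inE; apply: (iffP forallP).
have inj : injective (aff_app A b).
  move=> x1 x2 /addIr /(congr1 (mulmx (invmx A))).
  by rewrite !mulmxA mulVmx // !mul1mx.
have sub : aff_app A b @: S \subset S.
  by apply/subsetP => _ /imsetP[x /inS xX ->]; apply/inS/Ab.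
have imS : aff_app A b @: S = S.
  by apply/eqP; rewrite eqEcard sub (card_imset _ inj) leqnn.
have : y \in aff_app A b @: S by rewrite imS; apply/inS.
by case/imsetP => x /inS xX ->; exists x.
Qed.

Lemma inverse_maps_into A b :
  A \in unitmx -> aff_preserves K A b ->
  aff_maps_into (invmx A) (- (invmx A *m b)).
Proof.
move=> uA [_ onto] y /onto[x [xX <-]].
by rewrite /aff_app mulmxDr mulmxA mulVmx // mul1mx addrK.
Qed.

Lemma row_perm_maps_into (s : 'S_n) M c :
  (forall i, K (s i) = K i) -> aff_maps_into M c ->
  aff_maps_into (row_perm s M) (row_perm s c).
Proof.
move=> Ks Mc x xX i; rewrite /aff_app !row_permE -mulmxA -mulmxDr -row_permE mxE -Ks.
exact: Mc.
Qed.

Lemma row_replace_maps_into (r : 'I_n) (coef : 'I_n -> F) (e : F) :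
  (forall k t, t \in K k -> coef k * t \in K r) -> e \in K r ->
  aff_maps_into (row_replace_mx r coef) (\col_i (if i == r then e else 0)).
Proof.
move=> coefK eK x xX i; rewrite /aff_app mxE row_replace_mxE mxE.
case: eqP => [-> | _]; last by rewrite addr0.
by apply: subfieldD => //; apply: subfield_sum => // k _; apply: coefK.
Qed.

End MapsIntoX.

Section CoordinateImage.
Variables (F : finFieldType) (n : nat) (K : 'I_n -> {set F}).
Hypothesis hK : forall i, is_subfield (K i).
Hypothesis hchain : forall i i' : 'I_n, (i <= i')%N -> K i \subset K i'.
Variables (hh : 'I_n) (gamma : 'I_n -> F) (eta : F) (j : 'I_n).
Hypothesis hgam : gamma hh != 0.

Definition gamma_trunc (k : 'I_n) : F := if (k <= hh)%N then gamma k else 0.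

Lemma target_polyE :
  \sum_(k < n | (k <= hh)%N) gamma k *: 'X_k + eta%:MP = affine_mpoly gamma_trunc eta.
Proof.
rewrite /affine_mpoly big_mkcond; congr (_ + _); apply: eq_bigr => k _.
by rewrite /gamma_trunc; case: ifP; rewrite ?scale0r.
Qed.

(* Necessity: row j of A and b_j are p's coefficients, and preservation of X
   forces them into K_j; the inverse map gives the inclusion K_j <= K_h. *)
Lemma coordinate_image_necessary (A : 'M[F]_n) (b : 'cV[F]_n) :
  A \in unitmx -> aff_preserves K A b -> comp_aff 'X_j A b = affine_mpoly gamma_trunc eta ->
  [/\ forall k : 'I_n, (k <= hh)%N -> gamma k \in K j, eta \in K j & K hh = K j].
Proof.
move=> uA pres; have [Ab _] := pres.
rewrite comp_aff_X => /affine_mpoly_inj[rowj bj].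
have Ajk (k : 'I_n) : (k <= hh)%N -> A j k = gamma k by rewrite rowj /gamma_trunc => ->.
split.
- move=> k le_kh; rewrite -Ajk // -[A j k]mulr1.
  exact: maps_into_entry Ab (subfield1 (hK k)).
- by rewrite -bj; apply: maps_into_const Ab.
apply/eqP; rewrite eqEsubset (maps_into_support hK Ab) ?Ajk //=.
have [k [Ajk_nz Bkj_nz]] := mulmx1_diag_witness j (mulmxV uA).
have le_kh : (k <= hh)%N.
  by move: Ajk_nz; rewrite rowj /gamma_trunc; case: leqP; rewrite ?eqxx.
apply: subset_trans (hchain le_kh).
exact: (maps_into_support hK (inverse_maps_into uA pres) Bkj_nz).
Qed.

(* Sufficiency: the witness is the row replacement x_h := p(x) followed by the
   swap of coordinates j and h, which respects X because K_j = K_h. *)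
Lemma coordinate_image_sufficient :
  (forall k : 'I_n, (k <= hh)%N -> gamma k \in K j) -> eta \in K j -> K hh = K j ->
  exists (A : 'M[F]_n) (b : 'cV[F]_n),
    [/\ A \in unitmx, aff_preserves K A b & comp_aff 'X_j A b = affine_mpoly gamma_trunc eta].
Proof.
move=> gK eK Khj; pose s := tperm j hh.
pose T := row_replace_mx hh gamma_trunc.
pose bT : 'cV[F]_n := \col_i (if i == hh then eta else 0).
have uT : T \in unitmx.
  apply: row_replace_mx_unit; last by rewrite /gamma_trunc leqnn.
  by move=> k; rewrite /gamma_trunc ltnNge => /negbTE ->.
have uA : row_perm s T \in unitmx by rewrite row_permE unitmx_mul unitmx_perm.
exists (row_perm s T), (row_perm s bT); split=> //.
  apply: maps_into_preserves => //; apply: row_perm_maps_into.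
    by move=> i; rewrite /s; case: tpermP => [->|->|].
  apply: row_replace_maps_into => //; last by rewrite Khj.
  move=> k t tK; rewrite /gamma_trunc; case: ifP => [le_kh | _]; last first.
    by rewrite mul0r; apply: subfield0 (hK hh).
  apply: (subfieldM (hK hh)); first by rewrite Khj; apply: gK.
  exact: (subsetP (hchain le_kh)).
have rowj k : row_perm s T j k = gamma_trunc k by rewrite !mxE tpermL eqxx.
have bj : row_perm s bT j 0 = eta by rewrite !mxE tpermL eqxx.
rewrite comp_aff_X /affine_mpoly bj; congr (_ + _).
by apply: eq_bigr => k _; rewrite rowj.
Qed.

End CoordinateImage.

Theorem mainTheorem8 (F : finFieldType) (n : nat) (K : 'I_n -> {set F})
  (hK : forall i, is_subfield (K i))
  (hchain : forall i i' : 'I_n, (i <= i')%N -> K i \subset K i')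
  (hh : 'I_n) (gamma : 'I_n -> F) (eta : F) (hgam : gamma hh != 0)
  (j : 'I_n) :
  let p : {mpoly F[n]} := \sum_(k < n | (k <= hh)%N) gamma k *: 'X_k + eta%:MP in
  (exists (A : 'M[F]_n) (b : 'cV[F]_n),
     [/\ A \in unitmx, aff_preserves K A b & comp_aff 'X_j A b = p])
  <->
  [/\ forall k : 'I_n, (k <= hh)%N -> gamma k \in K j, eta \in K j & K hh = K j].
Proof.
rewrite /= target_polyE; split.
- by case=> A [b [uA pres compA]]; apply: coordinate_image_necessary pres compA.
- by case=> gK eK Khj; apply: coordinate_image_sufficient.
Qed.
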